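(* Let $G_1=(V_1,E_1)$ and $G_2=(V_2,E_2)$ be finite simple directed graphs and let $G=(V,E)$ be their product: $V=V_1\times V_2$, and $((v,u),(v',u'))\in E$ iff $(v,v')\in E_1$ and $(u,u')\in E_2$. For $e'=((v,u),(v',u'))\in E$ write $e'_1=(v,v')$. Let $P=(\pi,Q)$ be a stationary Markov chain on $G$ and $P_1=(\pi_1,Q_1)$ a stationary Markov chain on $G_1$. Suppose that (i) for all $e\in E_1$, $P_1(e)=\sum_{e'\in E,\ e'_1=e}P(e')$; and (ii) for all $u_0\in V_2$ and $v_0,v_1\in V_1$, $\sum_{u_1\in V_2}Q\big((v_1,u_1)\mid(v_0,u_0)\big)=Q_1(v_1\mid v_0)$. Then the $G_1$-marginal of the Markov process $\hat P$ equals the Markov process $\hat P_1$.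
   Context: A stationary Markov chain on a finite directed graph $H=(W,F)$ is a probability measure $P$ on $F$ such that for every vertex $w$, $\pi(w):=\sum_{e:\sigma(e)=w}P(e)=\sum_{e:\tau(e)=w}P(e)$, with $\pi(w)>0$ for all $w$ (no degenerate vertices); here $\sigma(e),\tau(e)$ are the source and target of $e$. The transition probabilities are $Q(e)=P(e)/\pi(\sigma(e))$; for a simple graph and $e=(w,w')$ one writes $Q(w'\mid w)=Q(e)$, and $Q(w'\mid w)=0$ if $(w,w')\notin F$. The pair is denoted $P=(\pi,Q)$. The induced stationary Markov process $\hat P$ is the probability measure on the space of bi-infinite paths $(e_i)_{i\in\mathbb{Z}}$ in $H$ (with $\tau(e_i)=\sigma(e_{i+1})$) determined by $\hat P(\{(e_i): e_0\cdots e_{n-1}=f_0\cdots f_{n-1}\})=P(f_0)\prod_{i=1}^{n-1}Q(f_i)$ for every finite path $f_0\cdots f_{n-1}$. The $G_1$-marginal of $\hat P$ is its pushforward under the map sending a bi-infinite path $(((v_i,u_i),(v_{i+1},u_{i+1})))_i$ in $G$ to the path $((v_i,v_{i+1}))_i$ in $G_1$. *)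

From HB Require Import structures.
From mathcomp Require Import all_boot all_order all_algebra.
From mathcomp Require Import all_classical all_reals all_analysis.
Unset Printing Implicit Defensive.
Import Order.TTheory GRing.Theory Num.Theory.
Local Open Scope classical_set_scope.
Local Open Scope ring_scope.

(* A finite simple directed graph is (V, E) with V : finType, E : rel V.
   A probability measure on the edge set is a function P : V -> V -> R
   supported on E. *)

Section MC.
Variables (R : realType) (V : finType).

Definition mc_pi (P : V -> V -> R) (w : V) : R := \sum_(w' : V) P w w'.

Definition mc_Q (P : V -> V -> R) (w w' : V) : R := P w w' / mc_pi P w.

Definition is_stationary_mc (E : rel V) (P : V -> V -> R) : Prop :=
  [/\ (forall w w', 0 <= P w w'),
      (forall w w', ~~ E w w' -> P w w' = 0),
      \sum_(w : V) \sum_(w' : V) P w w' = 1,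
      (forall w, \sum_(w' : V) P w w' = \sum_(w' : V) P w' w)
    & (forall w, 0 < mc_pi P w)].
End MC.

Definition prod_rel (V1 V2 : finType) (E1 : rel V1) (E2 : rel V2) :
  rel (V1 * V2)%type := fun x y => E1 x.1 y.1 && E2 x.2 y.2.

(* A bi-infinite path (e_i)_i in a simple graph is the same as a bi-infinite
   sequence of vertices (x_i)_i with e_i = (x_i, x_{i+1}).  We take as sample
   space all maps int -> V, with the product sigma-algebra (generated by the
   coordinate events [x k = a]); the point v0 is only needed because
   MathComp-Analysis measurable types must be pointed. *)
Definition omega (V : Type) (v0 : V) := int -> V.
HB.instance Definition _ (V : Type) (v0 : V) := gen_eqMixin (@omega V v0).
HB.instance Definition _ (V : Type) (v0 : V) := gen_choiceMixin (@omega V v0).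
HB.instance Definition _ (V : Type) (v0 : V) :=
  isPointed.Build (@omega V v0) (fun _ => v0).

Definition coord_events (V : Type) (v0 : V) : set (set (@omega V v0)) :=
  [set A | exists (k : int) (a : V), A = [set x | x k = a]].

Definition pathsp (V : Type) (v0 : V) := g_sigma_algebraType (@coord_events V v0).

Definition cyl (V : Type) (v0 : V) (k : int) (m : nat) (w : nat -> V)
  : set (@pathsp V v0) :=
  [set x | forall i : nat, (i <= m)%N -> x (k + i%:Z) = w i].

(* mu is the stationary Markov process induced by the chain P on (V,E):
   for every finite path f_0 ... f_n (n+1 edges, i.e. vertices w 0 .. w n.+1),
   at every position k, the cylinder probability is
   P(f_0) * prod_{i=1}^{n} Q(f_i). *)
Definition is_markov_process (R : realType) (V : finType) (v0 : V)
  (E : rel V) (P : V -> V -> R) (mu : probability (@pathsp V v0) R) : Prop :=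
  forall (k : int) (n : nat) (w : nat -> V),
    (forall i, (i <= n)%N -> E (w i) (w i.+1)) ->
    mu (@cyl V v0 k n.+1 w) =
      (P (w 0%N) (w 1%N) * \prod_(1 <= i < n.+1) @mc_Q R V P (w i) (w i.+1))%:E.

Definition marg1 (V1 V2 : Type) (a1 : V1) (a2 : V2)
  (x : @pathsp (V1 * V2)%type (a1, a2)) : @pathsp V1 a1 := fun i => (x i).1.

From HB Require Import structures.
From mathcomp Require Import all_boot all_order all_algebra.
From mathcomp Require Import all_classical all_reals all_analysis.
From mathcomp Require Import zify.
Import Order.TTheory GRing.Theory Num.Theory.
Local Open Scope classical_set_scope.
Local Open Scope ring_scope.

(* Both sides are probability measures on the sequence space, so by the
   pi-lambda uniqueness theorem it suffices that they agree on the cylinders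
   [x_k .. x_(k+n+1) = w]: the boxes (finitely many coordinate constraints)
   form an intersection-stable generator, and each box is the finite disjoint
   union of the cylinders it contains.  The image of mu on such a cylinder is
   the sum, over all V2-words u, of the weight of the product cylinder (w, u).
   Summing out u_(n+1), u_n, ..., u_2 from the right uses hypothesis (ii) once
   per step, turning a Q-factor into a Q1-factor; the remaining sum of P over
   u_0, u_1 is P1 by hypothesis (i).  Words that are not paths give null
   cylinders on both sides, since the edge weights of a chain already sum
   to 1. *)

Section fibres.
Context {d} {T : measurableType d} {B : finType} (g : T -> B).

Lemma bigcup_fibres (A : set T) :
  A = \bigcup_(b in [set: B]) (A `&` g @^-1` [set b]).
Proof. by apply/seteqP; split=> [x Ax|x [b _ []] //]; exists (g x). Qed.

Lemma measurable_fibres (A : set T) :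
  (forall b, measurable (A `&` g @^-1` [set b])) -> measurable A.
Proof.
by move=> mAg; rewrite (bigcup_fibres A); apply: fin_bigcup_measurable.
Qed.

Lemma measure_fibres {R : realType} (mu : {measure set T -> \bar R}) (A : set T) :
  (forall b, measurable (A `&` g @^-1` [set b])) ->
  mu A = (\sum_(b : B) mu (A `&` g @^-1` [set b]))%E.
Proof.
move=> mAg; rewrite [in LHS](bigcup_fibres A) measure_fin_bigcup //; first last.
- by move=> b b' _ _ [x [[_ <-] [_ <-]]].
- exact: finite_finset.
rewrite (fsbigE (index_enum B)) ?index_enum_uniq //; last first.
  by move=> b _; rewrite mem_index_enum.
by apply: eq_bigl => b; rewrite in_setT.
Qed.

End fibres.

Section boxes.
Context {V : finType} {v0 : V}.
Local Notation T := (@pathsp V v0).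

Definition box (k : int) (m : nat) (S : nat -> pred V) : set T :=
  [set x | forall i : nat, (i <= m)%N -> S i (x (k + i%:Z))].

Lemma measurable_coord_rel (j j' : int) (r : rel V) :
  measurable [set x : T | r (x j) (x j')].
Proof.
apply: (measurable_fibres (fun x : T => (x j, x j'))) => -[a b].
have -> : [set x : T | r (x j) (x j')] `&` (fun x => (x j, x j')) @^-1` [set (a, b)]
    = if r a b then [set x : T | x j = a] `&` [set x | x j' = b] else set0.
  case: ifP => rab; apply/seteqP; split=> x /=.
  - by case=> _ [-> ->].
  - by case=> -> ->.
  - by case=> + [xa xb]; rewrite xa xb rab.
  - by case.
case: ifP => _; last exact: measurable0.
by apply: measurableI; apply: sub_sigma_algebra; [exists j, a|exists j', b].
Qed.

Lemma measurable_box k m S : measurable (box k m S).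
Proof.
have -> : box k m S =
    \bigcap_(i in `I_m.+1) [set x : T | S i (x (k + i%:Z))].
  by apply/seteqP; split=> x H i /H.
apply: fin_bigcap_measurable => [|i _]; first exact: finite_II.
exact: (measurable_coord_rel _ _ (fun a _ => S i a)).
Qed.

Lemma eq_box k m S S' : (forall i, (i <= m)%N -> S i =1 S' i) ->
  box k m S = box k m S'.
Proof.
move=> SS'; apply/seteqP; split=> x H i im.
  by rewrite -SS' //; exact: H.
by rewrite SS' //; exact: H.
Qed.

Lemma cyl_box k m w : cyl V v0 k m w = box k m (fun i => pred1 (w i)) :> set T.
Proof. by apply/seteqP; split=> x H i /H /eqP. Qed.

Lemma measurable_cyl k m w : measurable (cyl V v0 k m w : set T).
Proof. by rewrite cyl_box; exact: measurable_box. Qed.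

Lemma boxI k m S S' :
  box k m S `&` box k m S' = box k m (fun i y => S i y && S' i y).
Proof.
apply/seteqP; split=> x /=; first by move=> [H H'] i im; rewrite /= H ?H'.
by move=> H; split=> i im; have /andP[] := H i im.
Qed.

Lemma box_widen k m S d M : (d + m <= M)%N ->
  box k m S =
  box (k - d%:Z) M (fun i => if (d <= i <= d + m)%N then S (i - d)%N else predT).
Proof.
move=> dmM; apply/seteqP; split=> x /= H i iM.
  case: ifP => // /andP[di idm].
  have -> : k - d%:Z + i%:Z = k + (i - d)%N%:Z by lia.
  by apply: H; lia.
have := H (d + i)%N ltac:(lia).
have -> : (d <= d + i <= d + m)%N by lia.
have -> : (d + i - d = i)%N by lia.
by have -> : k - d%:Z + (d + i)%N%:Z = k + i%:Z by lia.
Qed.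

Definition boxes : set (set T) := [set A | exists k n S, A = box k n.+1 S].

Lemma setI_closed_boxes : setI_closed boxes.
Proof.
move=> _ _ [k [n [S ->]]] [k' [n' [S' ->]]].
pose K := k - (`|k - k'|%N)%:Z; pose d := `|k - K|%N; pose d' := `|k' - K|%N.
exists K, (d + n + d' + n')%N.
rewrite (box_widen _ _ _ d (d + n + d' + n').+1); last by lia.
rewrite (box_widen k' _ _ d' (d + n + d' + n').+1); last by lia.
have -> : k - d%:Z = K by rewrite /d /K; lia.
have -> : k' - d'%:Z = K by rewrite /d' /K; lia.
by eexists; rewrite boxI.
Qed.

Lemma box_fibre k m S r (B : finType) (g : V -> B) (b : B) : (r <= m)%N ->
  box k m S `&` (fun x : T => g (x (k + r%:Z))) @^-1` [set b] =
  box k m (fun i y => if i == r then S i y && (g y == b) else S i y).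
Proof.
move=> rm; apply/seteqP; split=> x /=.
  by move=> [H <-] i im; case: eqP => [->|_]; rewrite /= ?H ?eqxx.
move=> H; split=> [i im|]; first by have := H i im; case: eqP => // -> /andP[].
by have := H r rm; rewrite eqxx => /andP[_ /eqP].
Qed.

Definition window k m (x : T) : {ffun 'I_m.+1 -> V} :=
  [ffun i : 'I_m.+1 => x (k + (i : nat)%:Z)].

Lemma box_window_fibre k m S (f : {ffun 'I_m.+1 -> V}) :
  box k m S `&` window k m @^-1` [set f] =
  if [forall i : 'I_m.+1, S i (f i)] then cyl V v0 k m (fun i => f (inord i))
  else set0.
Proof.
case: forallP => [Sf|nSf]; apply/seteqP; split=> x /=.
- by move=> [_ <-] i im; rewrite ffunE inordK.
- move=> H; split=> [i im|].
    by have := Sf (inord i); rewrite inordK // -H.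
  by apply/ffunP => i; rewrite ffunE (H i (ltn_ord i)) inord_val.
- by move=> [H xf]; apply: nSf => i; rewrite -xf ffunE; exact: (H i (ltn_ord i)).
- by case.
Qed.

End boxes.

Section cylinder_uniqueness.
Context {R : realType} {V : finType} {v0 : V}.
Local Notation T := (@pathsp V v0).
Variables rho1 rho2 : {measure set T -> \bar R}.
Hypothesis rho1_finite : (rho1 setT < +oo)%E.
Hypothesis rho12_cyl :
  forall k n w, rho1 (cyl V v0 k n.+1 w) = rho2 (cyl V v0 k n.+1 w).

Lemma eq_measure_boxes (A : set T) : boxes A -> rho1 A = rho2 A.
Proof.
move=> [k [n [S ->]]].
have mfibre f : measurable (box k n.+1 S `&` window k n.+1 @^-1` [set f] : set T).
  rewrite box_window_fibre; case: ifP => _; last exact: measurable0.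
  exact: measurable_cyl.
rewrite (measure_fibres (window k n.+1) rho1) //.
rewrite (measure_fibres (window k n.+1) rho2) //.
apply: eq_bigr => f _; rewrite box_window_fibre.
by case: ifP => _; rewrite ?rho12_cyl ?measure0.
Qed.

Lemma eq_measure_cyl (A : set T) : measurable A -> rho1 A = rho2 A.
Proof.
move=> mA.
have boxesT : boxes setT by exists 0, 0%N, (fun _ _ => true); apply/seteqP.
apply: (g_sigma_algebra_measure_unique boxes _ (fun _ => setT)) => //.
- by move=> _ [k [n [S ->]]]; exact: measurable_box.
- by rewrite bigcup_const.
- exact: setI_closed_boxes.
- exact: eq_measure_boxes.
move: mA; apply: sub_sigma_algebra2 => _ [k [a ->]].
exists k, 0%N, (fun i y => (i != 0%N) || (y == a)); apply/seteqP; split=> x /=.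
  by move=> xa [|i] //= _; rewrite addr0 xa eqxx.
by move=> /(_ 0%N isT); rewrite addr0 => /eqP.
Qed.

End cylinder_uniqueness.

Definition path_weight {R : realType} {V : finType} (P : V -> V -> R)
    (n : nat) (w : nat -> V) : R :=
  P (w 0%N) (w 1%N) * \prod_(1 <= i < n.+1) mc_Q R V P (w i) (w i.+1).

Section path_weight_theory.
Context {R : realType} {V : finType} {P : V -> V -> R}.

Lemma path_weightS n w :
  path_weight P n.+1 w = path_weight P n w * mc_Q R V P (w n.+1) (w n.+2).
Proof. by rewrite /path_weight big_nat_recr //= mulrA. Qed.

Lemma eq_path_weight n w w' : (forall i, (i <= n.+1)%N -> w i = w' i) ->
  path_weight P n w = path_weight P n w'.
Proof.
move=> ww'; rewrite /path_weight !ww' //; congr (_ * _).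
by apply: eq_big_nat => i /andP[_ lt_in]; rewrite !ww' // ltnW.
Qed.

Lemma path_weight_nonedge {E : rel V} {n w j} :
  (forall a b, ~~ E a b -> P a b = 0) -> (j <= n)%N -> ~~ E (w j) (w j.+1) ->
  path_weight P n w = 0.
Proof.
move=> P_nonedge jn nonedge; rewrite /path_weight.
case: j jn nonedge => [|j] jn nonedge; first by rewrite P_nonedge // mul0r.
rewrite (bigD1_seq j.+1) ?mem_index_iota ?iota_uniq //= /mc_Q.
by rewrite (P_nonedge _ _ nonedge) !mul0r mulr0.
Qed.

End path_weight_theory.

Section markov_process.
Context {R : realType} {V : finType} {v0 : V} {E : rel V} {P : V -> V -> R}.
Local Notation T := (@pathsp V v0).
Context {mu : probability T R}.
Hypothesis P_mc : is_stationary_mc R V E P.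
Hypothesis mu_markov : is_markov_process R V v0 E P mu.

Lemma markov_step_edge (k : int) : mu [set x : T | E (x k) (x (k + 1%:Z))] = 1%E.
Proof.
have [_ P_nonedge P_sum1 _ _] := P_mc.
pose edge_word (p : V * V) (i : nat) := if i is 0%N then p.1 else p.2.
pose g (x : T) := (x k, x (k + 1%:Z)).
have fibre p : [set x : T | E (x k) (x (k + 1%:Z))] `&` g @^-1` [set p] =
    if E p.1 p.2 then cyl V v0 k 1 (edge_word p) else set0.
  case: p => a b; case: ifP => /= Eab; apply/seteqP; split=> x /=.
  - by case=> _ [xa xb] [|[|i]] //= _; rewrite ?addr0.
  - move=> H; have := H 0%N isT; have := H 1%N isT; rewrite addr0 /= => xb xa.
    by rewrite /g xa xb Eab.
  - by case=> + [xa xb]; rewrite xa xb Eab.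
  - by case.
rewrite (measure_fibres g) => [|p]; last first.
  by rewrite fibre; case: ifP => _; [exact: measurable_cyl|exact: measurable0].
transitivity (\sum_(p : V * V) (P p.1 p.2)%:E)%E.
  apply: eq_bigr => -[a b] _; rewrite fibre /=; case: ifP => Eab.
    by rewrite mu_markov ?big_geq ?mulr1 // => i; rewrite leqn0 => /eqP ->.
  by rewrite measure0 P_nonedge ?Eab.
by rewrite sumEFin -(pair_bigA _ (fun a b => P a b)) P_sum1.
Qed.

Lemma markov_step_nonedge (k : int) :
  mu [set x : T | ~~ E (x k) (x (k + 1%:Z))] = 0%:E.
Proof.
have -> : [set x : T | ~~ E (x k) (x (k + 1%:Z))] =
    ~` [set x | E (x k) (x (k + 1%:Z))].
  by apply/seteqP; split=> x /= /negP.
by rewrite probability_setC ?markov_step_edge ?subee //; exact: measurable_coord_rel.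
Qed.

Lemma markov_cyl (k : int) n w : mu (cyl V v0 k n.+1 w) = (path_weight P n w)%:E.
Proof.
have [_ P_nonedge _ _ _] := P_mc.
have [/forallP path_w|/forallPn [[j jn] /= nonedge]] :=
  boolP [forall i : 'I_n.+1, E (w i) (w i.+1)].
  by apply: mu_markov => i ilen; exact: (path_w (Ordinal (ilen : (i < n.+1)%N))).
rewrite (path_weight_nonedge P_nonedge (jn : (j <= n)%N) nonedge).
apply/le_anti; rewrite measure_ge0 andbT -(markov_step_nonedge (k + j%:Z)).
apply: le_measure; rewrite ?inE; first exact: measurable_cyl.
  exact: (measurable_coord_rel _ _ (fun a b => ~~ E a b)).
move=> x /= H; have -> : k + j%:Z + 1%:Z = k + j.+1%:Z by lia.
by rewrite H ?H // ltnW.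
Qed.

End markov_process.

Section marginal_map.
Context (V1 V2 : finType) (a1 : V1) (a2 : V2).
Local Notation T := (@pathsp (V1 * V2)%type (a1, a2)).

Lemma measurable_marg1 : measurable_fun [set: T] (marg1 V1 V2 a1 a2).
Proof.
apply: (@measurability _ _ T (pathsp V1 a1) _ _ (coord_events V1 a1)) => //.
move=> _ [_ [k [a ->]] <-].
have -> : [set: T] `&` marg1 V1 V2 a1 a2 @^-1` [set x | x k = a] =
    [set x : T | (x k).1 == a].
  by apply/seteqP; split=> x /= => [[_ <-]|/eqP].
exact: (measurable_coord_rel k k (fun y _ => y.1 == a)).
Qed.

HB.instance Definition _ :=
  isMeasurableFun.Build _ _ _ _ (marg1 V1 V2 a1 a2) measurable_marg1.

End marginal_map.

Section marginal.
Context {R : realType} {V1 V2 : finType} {a1 : V1} {a2 : V2}.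
Context {E1 : rel V1} {E2 : rel V2} {P : (V1 * V2)%type -> (V1 * V2)%type -> R}
  {P1 : V1 -> V1 -> R}.
Local Notation V := (V1 * V2)%type.
Local Notation E := (prod_rel V1 V2 E1 E2).
Local Notation T := (@pathsp V (a1, a2)).
Local Notation Q := (mc_Q R V P).
Local Notation Q1 := (mc_Q R V1 P1).
Context {mu : probability T R}.
Hypothesis P_mc : is_stationary_mc R V E P.
Hypothesis P1_mc : is_stationary_mc R V1 E1 P1.
Hypothesis P1E : forall v v' : V1, E1 v v' ->
  P1 v v' = \sum_(u : V2) \sum_(u' : V2 | E (v, u) (v', u')) P (v, u) (v', u').
Hypothesis QE : forall (u0 : V2) (v0 v1 : V1),
  \sum_(u1 : V2) Q (v0, u0) (v1, u1) = Q1 v0 v1.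
Hypothesis mu_markov : is_markov_process R V (a1, a2) E P mu.

Lemma P1_sum v v' : P1 v v' = \sum_(u : V2) \sum_(u' : V2) P (v, u) (v', u').
Proof.
have [_ P_nonedge _ _ _] := P_mc; have [_ P1_nonedge _ _ _] := P1_mc.
have [Evv'|nEvv'] := boolP (E1 v v').
  rewrite P1E //; apply: eq_bigr => u _; rewrite big_mkcond; apply: eq_bigr => u' _.
  by case: ifP => // nE; rewrite P_nonedge ?nE.
rewrite P1_nonedge // big1 // => u _; rewrite big1 // => u' _.
by rewrite P_nonedge // /prod_rel /= (negbTE nEvv').
Qed.

Definition update (u : nat -> V2) (j : nat) (b : V2) : nat -> V2 :=
  fun i => if i == j then b else u i.

Section fixed_word.
Variables (k : int) (n : nat) (w : nat -> V1).

Definition partial_cyl (j : nat) (u : nat -> V2) : set T :=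
  box k n.+1 (fun i y => (y.1 == w i) && ((i < j)%N ==> (y.2 == u i))).

Lemma partial_cyl_split j u : (j <= n.+1)%N ->
  mu (partial_cyl j u) = (\sum_(b : V2) mu (partial_cyl j.+1 (update u j b)))%E.
Proof.
move=> jn; pose g (x : T) := (x (k + j%:Z)).2.
have fibre b : partial_cyl j u `&` g @^-1` [set b] = partial_cyl j.+1 (update u j b).
  rewrite /partial_cyl box_fibre //; apply: eq_box => i _ [y1 y2] /=.
  by rewrite /update ltnS; case: ltngtP => //= ->; rewrite andbT.
rewrite (measure_fibres g) => [|b].
  by apply: eq_bigr => b _; rewrite fibre.
by rewrite fibre; exact: measurable_box.
Qed.

Lemma partial_cyl_tail t u : (t <= n)%N ->
  mu (partial_cyl t.+2 u) =
  (path_weight P t (fun i => (w i, u i)) *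
   \prod_(t.+1 <= i < n.+1) Q1 (w i) (w i.+1))%:E.
Proof.
move=> tn; have [s tsn] : exists s, (t + s = n)%N by exists (n - t)%N; lia.
elim: s t tsn u {tn} => [|s IH] t tsn u.
  move: tsn; rewrite addn0 => ->.
  rewrite big_geq // mulr1 -(markov_cyl P_mc mu_markov k).
  rewrite cyl_box; congr (mu _); apply: eq_box => i iln [y1 y2] /=.
  by rewrite ltnS iln xpair_eqE.
rewrite partial_cyl_split; last by lia.
have weight_update b : path_weight P t.+1 (fun i => (w i, update u t.+2 b i)) =
    path_weight P t (fun i => (w i, u i)) * Q (w t.+1, u t.+1) (w t.+2, b).
  rewrite path_weightS /update eqxx; have -> : (t.+1 == t.+2) = false by lia.
  congr (_ * _); apply: eq_path_weight => i it.
  by have -> : (i == t.+2) = false by lia.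
have tsn' : (t.+1 + s = n)%N by lia.
transitivity (\sum_(b : V2)
    (path_weight P t (fun i => (w i, u i)) * Q (w t.+1, u t.+1) (w t.+2, b) *
     \prod_(t.+2 <= i < n.+1) Q1 (w i) (w i.+1))%:E)%E.
  by apply: eq_bigr => b _; rewrite (IH t.+1 tsn') weight_update.
rewrite sumEFin -mulr_suml -mulr_sumr QE (big_ltn (m := t.+1)); last by lia.
by rewrite mulrA.
Qed.

Lemma marg1_cyl :
  pushforward mu (marg1 V1 V2 a1 a2) (cyl V1 a1 k n.+1 w) = (path_weight P1 n w)%:E.
Proof.
have -> : pushforward mu (marg1 V1 V2 a1 a2) (cyl V1 a1 k n.+1 w) =
    mu (partial_cyl 0 (fun _ => a2)).
  by congr (mu _); apply/seteqP; split=> x /= H i /H; rewrite ?andbT => /eqP.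
rewrite partial_cyl_split //.
transitivity (\sum_(b0 : V2) \sum_(b1 : V2)
    (P (w 0%N, b0) (w 1%N, b1) * \prod_(1 <= i < n.+1) Q1 (w i) (w i.+1))%:E)%E.
  apply: eq_bigr => b0 _; rewrite partial_cyl_split //; apply: eq_bigr => b1 _.
  by rewrite partial_cyl_tail // /path_weight big_geq // mulr1.
rewrite /path_weight P1_sum mulr_suml -sumEFin; apply: eq_bigr => b0 _.
by rewrite mulr_suml -sumEFin.
Qed.

End fixed_word.

End marginal.

Theorem lemma27 (R : realType) (V1 V2 : finType) (a1 : V1) (a2 : V2)
  (E1 : rel V1) (E2 : rel V2)
  (P : (V1 * V2)%type -> (V1 * V2)%type -> R) (P1 : V1 -> V1 -> R)
  (mu : probability (@pathsp (V1 * V2)%type (a1, a2)) R) (nu : probability (@pathsp V1 a1) R) :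
  @is_stationary_mc R (V1 * V2)%type (@prod_rel V1 V2 E1 E2) P ->
  @is_stationary_mc R V1 E1 P1 ->
  (forall v v' : V1, E1 v v' ->
     P1 v v' = \sum_(u : V2) \sum_(u' : V2 | @prod_rel V1 V2 E1 E2 (v, u) (v', u'))
                 P (v, u) (v', u')) ->
  (forall (u0 : V2) (v0 v1 : V1),
     \sum_(u1 : V2) @mc_Q R (V1 * V2)%type P (v0, u0) (v1, u1) = @mc_Q R V1 P1 v0 v1) ->
  @is_markov_process R (V1 * V2)%type (a1, a2) (@prod_rel V1 V2 E1 E2) P mu ->
  @is_markov_process R V1 a1 E1 P1 nu ->
  forall A : set (@pathsp V1 a1), measurable A ->
    pushforward mu (@marg1 V1 V2 a1 a2) A = nu A.
Proof.
move=> P_mc P1_mc P1E QE mu_markov nu_markov.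
apply: (eq_measure_cyl (distribution mu (marg1 V1 V2 a1 a2)) nu).
  exact: le_lt_trans (probability_le1 _ measurableT) (ltry 1).
move=> k n w; transitivity (path_weight P1 n w)%:E.
  exact: (marg1_cyl P_mc P1_mc P1E QE mu_markov).
exact/esym/(markov_cyl P1_mc nu_markov).
Qed.
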